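(* Fix an integer $d\ge1$ and let $S_d=\langle a_0,\dots,a_d,s\mid s a_0 s^{-1}a_0^{-1},\ a_{i+1}a_ia_{i+1}^{-1}a_0^{-1}\ (0\le i<d)\rangle$. For every generator $u\in\{s,a_0,\dots,a_{d-1}\}$ (i.e., every generator $u\neq a_d$) we have \[ \bigl|\mathrm{erim}(\mathrm{Fan}(u^n,a_d^n))\bigr|\asymp n^d,\qquad \mathrm{Area}(\mathrm{Fan}(u^n,a_d^n))\asymp n^{d+1}. \]
   Context: For functions $f,g$ on positive integers, $f\asymp g$ means there are constants $c,C>0$ with $c\,g(n)\le f(n)\le C\,g(n)$ for all $n\ge1$. $\mathrm{Area}$ of a fan is its number of square $2$-cells, and $|w|$ is word length. Each relator of $S_d$ has the form $\lambda p\lambda^{-1}q^{-1}$ with $(\lambda,p,q)=(s,a_0,a_0)$ or $(a_{i+1},a_i,a_0)$. In the unit square of such a relator in the presentation complex, reading from a corner $B$: $\lambda$ goes from $B$ to $Q$, $p$ from $Q$ to the top corner $T$, $\lambda$ from $R$ to $T$, $q$ from $B$ to $R$; the edges $p,\lambda$ into $T$ are the top edges. The descending link is the graph on the generators in which $u,v$ are adjacent iff some relator square has top edges labeled $u$ and $v$; for $S_d$ it is the path $s - a_0 - a_1 - \cdots - a_d$, and each adjacent pair corresponds to a unique relator. For a relator $e$ put $x_e=q^{-1}\lambda$. Simple fans: $\mathrm{Fan}(a,a)$ is a single edge labeled $a$ (apex at its end), empty rims, no squares. For distinct generators $a,b$, let $a=v_0,\dots,v_k=b$ be the path in the descending link,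 take copies $C_i$ of the relator square with top edges $v_{i-1},v_i$, and glue the top edge $v_i$ of $C_i$ to that of $C_{i+1}$ ($1\le i<k$); the common top corner is the apex. The vertex rim is the concatenation of the two-letter words read along the bottom of $C_i$ from the initial vertex of its top edge $v_{i-1}$ to the initial vertex of its top edge $v_i$ (each is $q^{-1}\lambda$ or $\lambda^{-1}q$), so it has the form $a_1^{-1}b_1\cdots a_k^{-1}b_k$; the edge rim $\mathrm{erim}$ replaces $q^{-1}\lambda$ by $x_e$ and $\lambda^{-1}q$ by $x_e^{-1}$. Fans of height $n\ge2$: for positive words $u=au'$, $v=bv'$ of length $n$ with $a,b$ generators, let $F'=\mathrm{Fan}(u',v')$ with vertex rim $a_1^{-1}b_1\cdots a_k^{-1}b_k$, put $b_0=a$, $a_{k+1}=b$, and attach for $i=1,\dots,k+1$ the simple fan $\mathrm{Fan}(b_{i-1},a_i)$ with apex at the rim vertex where the edges $b_{i-1}$ and $a_i$ terminate (for $i=1$, the initial vertex of the side $u'$, the new edge $a$ extending that side; symmetrically for $i=k+1$), identifying its top edges with the corresponding edges. This is $\mathrm{Fan}(u,v)$; its vertex and edge rims are the concatenations of those of the attached simple fans. *)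

From mathcomp Require Import all_boot all_order all_algebra.
Set Implicit Arguments. Unset Strict Implicit. Unset Printing Implicit Defensive.
Import Order.TTheory GRing.Theory Num.Theory.

(* Generators of S_d: s (Gs) and a_i (Ga i).  Only a_0..a_d are used. *)
Inductive gen := Gs | Ga of nat.

(* Position of a generator along the descending link path s - a_0 - ... - a_d *)
Definition pos (g : gen) : nat := if g is Ga i then i.+1 else 0.
Definition gen_at (k : nat) : gen := if k is i.+1 then Ga i else Gs.

(* A relator  lam p lam^-1 q^-1 ; top edges are p and lam. *)
Record relator := Rel { lam : gen; pp : gen; qq : gen }.

Definition relators (d : nat) : seq relator :=
  Rel Gs (Ga 0) (Ga 0) :: [seq Rel (Ga i.+1) (Ga i) (Ga 0) | i <- iota 0 d].

(* The unique relator whose top edges are the generators at positions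
   j and j.+1 of the descending link path (the j-th edge of the path). *)
Definition rel_edge (j : nat) : relator :=
  if j is i.+1 then Rel (Ga i.+1) (Ga i) (Ga 0) else Rel Gs (Ga 0) (Ga 0).

(* A square copy C of relator e, glued in a simple fan with top edges
   x (=v_{i-1}) then y (=v_i).  We record (e, o) where o = true iff
   x = lam, in which case the bottom word from the initial vertex of the
   top edge x to that of the top edge y is q^-1 lam (edge letter x_e);
   otherwise it is lam^-1 q (edge letter x_e^-1). *)
Definition square (x y : gen) : relator * bool :=
  let e := rel_edge (minn (pos x) (pos y)) in (e, pos x == pos (lam e)).

(* Vertex-rim contribution of a square, as the pair (a_i, b_i) of the
   two-letter word a_i^-1 b_i. *)
Definition vpair (sq : relator * bool) : gen * gen :=
  if sq.2 then (qq sq.1, lam sq.1) else (lam sq.1, qq sq.1).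

(* Edge-rim letter of a square: (e, true) = x_e, (e, false) = x_e^-1. *)
Definition eletter (sq : relator * bool) : relator * bool := sq.

(* Squares of the simple fan Fan(a,b), in order C_1, ..., C_k along the
   descending-link path a = v_0, ..., v_k = b.  Fan(a,a) has no squares. *)
Definition simple_fan (a b : gen) : seq (relator * bool) :=
  let i := pos a in let j := pos b in
  if i <= j then [seq square (gen_at k) (gen_at k.+1) | k <- iota i (j - i)]
  else [seq square (gen_at k.+1) (gen_at k) | k <- rev (iota j (i - j))].

(* fan u v = (squares of the outermost layer, i.e. of the attached simple
   fans, in rim order ; total number of squares = Area) for Fan(u,v),
   u, v positive words of the same length n >= 1. *)
Fixpoint fan (u v : seq gen) : seq (relator * bool) * nat :=
  match u, v with
  | a :: u', b :: v' =>
    match u', v' with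
    | [::], [::] => let sq := simple_fan a b in (sq, size sq)
    | _, _ =>
      let F' := fan u' v' in
      let rim := map vpair F'.1 in                 (* (a_1,b_1)..(a_k,b_k) *)
      let as_ := rcons (map fst rim) b in          (* a_1..a_k, a_{k+1} = b *)
      let bs := a :: map snd rim in                (* b_0 = a, b_1..b_k *)
      let sq := flatten [seq simple_fan p.1 p.2 | p <- zip bs as_] in
      (sq, F'.2 + size sq)
    end
  | _, _ => ([::], 0)
  end.

Definition vrim (u v : seq gen) : seq (gen * gen) := map vpair (fan u v).1.
Definition erim (u v : seq gen) : seq (relator * bool) := map eletter (fan u v).1.
Definition area (u v : seq gen) : nat := (fan u v).2.

Definition asymp (f g : nat -> nat) : Prop :=
  exists c C : rat, (0 < c)%R /\ (0 < C)%R /\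
    forall n : nat, (1 <= n)%N ->
      (c * (g n)%:R <= (f n)%:R /\ (f n)%:R <= C * (g n)%:R)%R.

Example ex1 : (size (erim (nseq 3 (Ga 0)) (nseq 3 (Ga 1))), area (nseq 3 (Ga 0)) (nseq 3 (Ga 1))) = (3, 6).
Proof. by vm_compute. Qed.

From mathcomp Require Import all_boot all_order all_algebra.
From mathcomp Require Import zify.
Import GRing.Theory Num.Theory.

(* The outer layer of Fan(u^(n+1), a_d^(n+1)) consists only of relator squares
   read upwards along the descending link path s - a_0 - ... - a_d, so it is
   recorded by the positions k of its squares on that path.  If c_j(n) counts
   the squares at position >= j in the n-th layer and p is the position of u,
   the gluing rule gives the Pascal-type recurrence
     c_j(n+1) = c_(j+1)(n+1) + c_j(n) + [p <= j]     (0 < j <= d),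
   which traps c_j(n) between 'C(n+1, d+1-j) and (n+2)^(d+1-j).  For j = 1 this
   is the length n^d of the rim, and summing the layers gives the area n^(d+1). *)

Lemma leq_exp2rW m n e : m <= n -> m ^ e <= n ^ e.
Proof. by case: e => // e le_mn; rewrite leq_exp2r. Qed.

Lemma count_mem_iota i m n : count_mem i (iota m n) = (m <= i < m + n).
Proof. by rewrite count_uniq_mem ?iota_uniq // mem_iota. Qed.

Lemma count_leq_split j L : count (leq j) L = count_mem j L + count (leq j.+1) L.
Proof. by elim: L => //= k L ->; case: (ltngtP j k); lia. Qed.

Lemma size_count_split0 (L : seq nat) : size L = count_mem 0 L + count (leq 1) L.
Proof. by rewrite -count_leq_split -(count_predT L); apply: eq_count. Qed.

Lemma count_leq_iota j m n : count (leq j) (iota m n) = m + n - maxn j m.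
Proof. by elim: n m => [|n IHn] m /=; rewrite ?IHn; case: leqP; lia. Qed.

Lemma ffact_ge_expn N m : (N - m) ^ m <= N ^_ m.
Proof.
elim: m => [|m IHm]; first by rewrite ffactn0.
rewrite ffactnSr expnSr leq_mul ?(leq_trans _ IHm) ?leq_exp2rW //; lia.
Qed.

Lemma fact_leq_expn m : m`! <= m ^ m.
Proof.
elim: m => // m IHm; rewrite factS expnS leq_mul2l /=.
by apply: leq_trans IHm _; apply: leq_exp2rW.
Qed.

Lemma expn_leq_bin N m : 0 < m -> N ^ m <= (2 * m) ^ m * ('C(N, m) + 1).
Proof.
move=> m_gt0; rewrite mulnDr muln1; case: (ltnP N (2 * m)) => [lt_N | le_N].
  by apply: leq_trans (leq_addl _ _); apply: leq_exp2rW; lia.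
apply: leq_trans (leq_addr _ _); apply: (@leq_trans ((2 * (N - m)) ^ m)).
  by apply: leq_exp2rW; lia.
rewrite !expnMn -mulnA leq_mul2l; apply/orP; right.
apply: leq_trans (ffact_ge_expn N m) _.
by rewrite -bin_ffact mulnC leq_mul2r fact_leq_expn orbT.
Qed.

Lemma asymp_expn (f : nat -> nat) (m C : nat) : 0 < m ->
  (forall n, 0 < f n.+1 /\ 'C(n.+1, m) <= f n.+1) ->
  (forall n, f n.+1 <= C * n.+2 ^ m) -> asymp f (fun n => n ^ m).
Proof.
move=> m_gt0 lb ub; have C_gt0 : 0 < C.
  by have := ub 0; have [f_gt0 _] := lb 0; rewrite lt0n; apply: contraTneq => ->; lia.
exists ((2 * (2 * m) ^ m)%:R^-1)%R, ((C * 2 ^ m)%:R)%R; rewrite invr_gt0 !ltr0n.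
rewrite !muln_gt0 !expn_gt0 C_gt0 /=; split; first by lia.
split=> // -[//|n] _; rewrite ler_pdivrMl ?ltr0n ?muln_gt0 ?expn_gt0; last by lia.
rewrite -!natrM !ler_nat; split.
  have [f_gt0 lb_f] := lb n; apply: leq_trans (expn_leq_bin _ _ m_gt0) _.
  by rewrite -mulnA mulnCA leq_mul2l; apply/orP; right; lia.
apply: leq_trans (ub n) _; rewrite -mulnA leq_mul2l -expnMn leq_exp2rW ?orbT //.
lia.
Qed.

Definition up_square (k : nat) := square (gen_at k) (gen_at k.+1).

Definition rim_pos (k : nat) : nat := if k is 0 then 0 else 1.

(* Positions of the squares of the simple fans Fan(b_(i-1), a_i) glued onto a
   layer L: b is the position of b_0, and [rim_pos k] that of the rim letter b_i
   contributed by [up_square k]. *)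
Fixpoint next_layer (d b : nat) (L : seq nat) : seq nat :=
  match L with
  | [::] => iota b (d.+1 - b)
  | k :: L' => iota b (k.+1 - b) ++ next_layer d (rim_pos k) L'
  end.

Definition layer (d p n : nat) : seq nat := iter n.+1 (next_layer d p) [::].

Lemma pos_gen_at k : pos (gen_at k) = k.
Proof. by case: k. Qed.

Lemma vpair_up_square k : vpair (up_square k) = (gen_at k.+1, gen_at (rim_pos k)).
Proof.
case: k => [|k] //.
by rewrite /up_square /square /= minnSS (minn_idPl (leqnSn _)) eqSS ltn_eqF.
Qed.

Lemma simple_fan_up x y : pos x <= pos y ->
  simple_fan x y = map up_square (iota (pos x) (pos y - pos x)).
Proof. by move=> le_xy; rewrite /simple_fan le_xy. Qed.

Lemma fan_cons2 a a' u b b' v : fan [:: a, a' & u] [:: b, b' & v] =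
  let F' := fan (a' :: u) (b' :: v) in
  let rim := map vpair F'.1 in
  let sq := flatten [seq simple_fan p.1 p.2 |
                     p <- zip (a :: map snd rim) (rcons (map fst rim) b)] in
  (sq, F'.2 + size sq).
Proof. by []. Qed.

Lemma outer_layer_up d x L : pos x <= (head d L).+1 ->
  let rim := map vpair (map up_square L) in
  flatten [seq simple_fan p.1 p.2 | p <- zip (x :: map snd rim) (rcons (map fst rim) (Ga d))]
  = map up_square (next_layer d (pos x) L).
Proof.
elim: L x => [|k L IHL] x /= le_x; first by rewrite cats0 simple_fan_up.
rewrite vpair_up_square /= simple_fan_up // map_cat IHL; first by rewrite pos_gen_at.
by rewrite pos_gen_at; case: k {le_x}.
Qed.

Lemma layerS d p n : layer d p n.+1 = next_layer d p (layer d p n).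
Proof. by rewrite /layer iterS. Qed.

Lemma layer_cons d p n : p <= d -> exists L, layer d p n = p :: L.
Proof.
move=> le_pd; have head_next L : p <= head d L -> exists L', next_layer d p L = p :: L'.
  by case: L => [|k L] /= le_p; rewrite subSn //=; eexists.
elim: n => [|n [L IHn]]; first exact: head_next.
by rewrite layerS IHn; apply: head_next.
Qed.

Lemma fan_nseq d u n : pos u <= d ->
  fan (nseq n.+1 u) (nseq n.+1 (Ga d)) =
  (map up_square (layer d (pos u) n), \sum_(k < n.+1) size (layer d (pos u) k)).
Proof.
move=> le_ud; elim: n => [|n IHn].
  by rewrite /= simple_fan_up ?big_ord1 ?size_map //= leqW.
rewrite fan_cons2 IHn /= outer_layer_up -?layerS; last first.
  by have [L ->] := layer_cons d (pos u) n le_ud.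
by rewrite size_map [in RHS]big_ord_recr.
Qed.

Section NextLayer.

Variable d : nat.

Lemma count_mem0_next_layer b L : b <= 1 ->
  count_mem 0 (next_layer d b L) = (b == 0) + count_mem 0 L.
Proof.
elim: L b => [|k L IHL] b le_b1 /=; rewrite ?count_cat count_mem_iota.
  by case: b le_b1 => [|[]].
by rewrite IHL; [case: b le_b1 => [|[]] // _; case: k => /= *; lia | case: k].
Qed.

Lemma count_mem_next_layer j b L : 0 < j -> b <= 1 ->
  count_mem j (next_layer d b L) = count (leq j) L + (j <= d).
Proof.
move=> j_gt0; elim: L b => [|k L IHL] b le_b1 /=; rewrite ?count_cat count_mem_iota.
  by case: b le_b1 => [|[]] //= _; lia.
by rewrite IHL; [case: b le_b1 => [|[]] //= _; lia | case: k].
Qed.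

Lemma all_next_layer b L : all (leq^~ d) L -> all (leq^~ d) (next_layer d b L).
Proof.
elim: L b => [|k L IHL] b /=.
  by move=> _; apply/allP => x; rewrite mem_iota; lia.
case/andP=> le_kd le_L; rewrite all_cat IHL // andbT.
by apply/allP => x; rewrite mem_iota; lia.
Qed.

End NextLayer.

Section Layers.

Variables d p : nat.
Hypothesis le_pd : p <= d.

Local Notation layer := (layer d p).

Lemma count_leq_layer_gt j n : d < j -> count (leq j) (layer n) = 0.
Proof.
move=> lt_dj; have /allP le_d : all (leq^~ d) (layer n).
  by elim: n => [|n IHn]; rewrite ?layerS; apply: all_next_layer.
apply/eqP; rewrite -leqn0 leqNgt -has_count; apply/hasP => -[k /le_d]; lia.
Qed.

Lemma count_mem0_layerS n :
  count_mem 0 (layer n.+1) = count_mem 0 (layer n) + (p == 0).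
Proof.
rewrite layerS; have [L ->] := layer_cons d p n le_pd.
by rewrite /= subSnn /= count_mem0_next_layer; case: p => //= *; lia.
Qed.

Lemma count_mem_layerS j n : 0 < j <= d ->
  count_mem j (layer n.+1) = count (leq j) (layer n) + (p <= j).
Proof.
case/andP=> j_gt0 le_jd; rewrite layerS; have [L ->] := layer_cons d p n le_pd.
by rewrite /= subSnn /= count_mem_next_layer //; case: p => //= *; lia.
Qed.

Lemma count_leq_layerS j n : 0 < j <= d ->
  count (leq j) (layer n.+1) =
  count (leq j.+1) (layer n.+1) + count (leq j) (layer n) + (p <= j).
Proof. by move=> le_0jd; rewrite count_leq_split count_mem_layerS //; lia. Qed.

Lemma count_leq_layer_ub j n : 0 < j -> count (leq j) (layer n) < n.+2 ^ (d.+1 - j).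
Proof.
elim: n j => [|n IHn] j j_gt0.
  by rewrite count_leq_iota; have := ltn_expl (d.+1 - j) (isT : 1 < 2); lia.
move Em : (d.+1 - j) => m; elim: m j Em j_gt0 => [|m IHm] j Em j_gt0.
  by rewrite count_leq_layer_gt //; lia.
have le_jd : 0 < j <= d by lia.
have ub_next := IHm j.+1 ltac:(lia) isT.
have ub_prev := IHn j j_gt0; rewrite Em in ub_prev.
have le_exp : n.+2 ^ m <= n.+3 ^ m by apply: leq_exp2rW.
rewrite count_leq_layerS // !expnS in ub_prev *; nia.
Qed.

Lemma count_leq_layer_lb j n : 0 < j <= d -> 'C(n.+1, d.+1 - j) <= count (leq j) (layer n).
Proof.
elim: n j => [|n IHn] j le_0jd.
  rewrite count_leq_iota; case/andP: le_0jd => j_gt0 le_jd.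
  by case: (d.+1 - j) => [|[|m]]; rewrite ?bin0 ?bin1 ?bin_small //; lia.
have rec_j := count_leq_layerS j n le_0jd.
case/andP: (le_0jd) => j_gt0; rewrite leq_eqVlt => /orP[/eqP eq_jd | lt_jd].
  rewrite eq_jd subSnn bin1 in rec_j *; have := IHn d ltac:(lia).
  by rewrite subSnn bin1; lia.
have rec_j1 := count_leq_layerS j.+1 n ltac:(lia).
have eq_m : d.+1 - j = (d.+1 - j.+1).+1 by lia.
rewrite eq_m binS; have := IHn j.+1 ltac:(lia); have := IHn j le_0jd.
by rewrite eq_m; lia.
Qed.

Hypothesis d_gt0 : 0 < d.

Lemma size_layer_ub n : size (layer n) <= 2 * n.+2 ^ d.
Proof.
have zeros_ub : count_mem 0 (layer n) <= n.+1.
  elim: n => [|n IHn]; first by rewrite count_mem_iota; lia.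
  by rewrite count_mem0_layerS; lia.
have := count_leq_layer_ub 1 n isT; rewrite subn1 /=.
have : n.+2 <= n.+2 ^ d by rewrite -{1}(expn1 n.+2) leq_pexp2l.
by rewrite size_count_split0; lia.
Qed.

Lemma size_layer_lb n : 0 < size (layer n) /\ 'C(n.+1, d) <= size (layer n).
Proof.
split; first by have [L ->] := layer_cons d p n le_pd.
have := count_leq_layer_lb 1 n ltac:(lia); rewrite subn1 /=.
by rewrite size_count_split0; lia.
Qed.

Lemma area_layers_ub n : \sum_(k < n.+1) size (layer k) <= 2 * n.+2 ^ d.+1.
Proof.
apply: (@leq_trans (\sum_(k < n.+1) 2 * n.+2 ^ d)).
  apply: leq_sum => k _; apply: leq_trans (size_layer_ub k) _.
  by rewrite leq_mul2l leq_exp2rW ?orbT // ltnS.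
by rewrite sum_nat_const card_ord expnS mulnCA leq_mul2l leq_mul2r leqnSn !orbT.
Qed.

Lemma area_layers_lb n :
  0 < \sum_(k < n.+1) size (layer k) /\ 'C(n.+1, d.+1) <= \sum_(k < n.+1) size (layer k).
Proof.
elim: n => [|n [pos_n IHn]].
  by rewrite big_ord1 bin_small //; case: (size_layer_lb 0).
have -> : \sum_(k < n.+2) size (layer k) =
          \sum_(k < n.+1) size (layer k) + size (layer n.+1) by rewrite big_ord_recr.
rewrite binS; have [_ lb] := size_layer_lb n.+1.
have : 'C(n.+1, d) <= 'C(n.+2, d) by apply: leq_bin2l.
split; lia.
Qed.

End Layers.

Theorem mainTheorem6 (d : nat) (hd : (1 <= d)%N) (u : gen)
  (hu : u = Gs \/ exists i, (i < d)%N /\ u = Ga i) :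
  asymp (fun n => size (erim (nseq n u) (nseq n (Ga d)))) (fun n => n ^ d) /\
  asymp (fun n => area (nseq n u) (nseq n (Ga d))) (fun n => n ^ d.+1).
Proof.
have le_ud : pos u <= d by case: hu => [-> | [i [lt_id ->]]].
split; apply: (@asymp_expn _ _ 2) => // n; rewrite ?/erim ?/area fan_nseq //= ?size_map.
- exact: size_layer_lb.
- exact: size_layer_ub.
- exact: area_layers_lb.
- exact: area_layers_ub.
Qed.
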